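(* In any execution of Algorithm $\mathsf{AG}$ (described in the context) with a guild, there exists a process $p_i$ in the maximal guild such that the set $S_i$ that $p_i$ sent in its $\mathrm{DistributeS}$ message is, after the execution of the algorithm, contained in the set $U_k$ of every process $p_k$ in the maximal guild.
   Context: System model: a finite set $\mathcal{P}=\{p_1,\dots,p_n\}$ of processes communicating asynchronously over authenticated point-to-point links; every message sent from a correct process to a correct process is eventually delivered. A process that follows its protocol is correct; others (faulty, Byzantine) may behave arbitrarily. $F\subseteq\mathcal{P}$ denotes the (unknown) set of faulty processes of an execution. For $\mathcal{A}\subseteq 2^{\mathcal{P}}$, write $\mathcal{A}^*=\{A' : A'\subseteq A,\ A\in\mathcal{A}\}$. An asymmetric fail-prone system is an array $\mathbb{F}=[\mathcal{F}_1,\dots,\mathcal{F}_n]$ with $\mathcal{F}_i\subseteq 2^{\mathcal{P}}$. An asymmetric Byzantine quorum system for $\mathbb{F}$ is an array $\mathbb{Q}=[\mathcal{Q}_1,\dots,\mathcal{Q}_n]$ with $\mathcal{Q}_i\subseteq 2^{\mathcal{P}}$ (quorums for $p_i$) satisfying: (consistency) for all $i,j$, all $Q_i\in\mathcal{Q}_i$, $Q_j\in\mathcal{Q}_j$, $F_{ij}\in\mathcal{F}_i^*\cap\mathcal{F}_j^*$: $Q_i\cap Q_j\not\subseteq F_{ij}$; (availability) for all $i$ and $F_i\in\mathcal{F}_i$ there is $Q_i\in\mathcal{Q}_i$ with $F_i\cap Q_i=\emptyset$. A kernel for $p_i$ is a set $K\subseteq\mathcal{P}$ intersecting every $Q\in\mathcal{Q}_i$;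 $\mathcal{K}_i$ is the set of kernels for $p_i$. A correct process $p_i$ is wise if $F\in\mathcal{F}_i^*$. A guild is a set $\mathcal{G}$ of wise processes such that every $p_i\in\mathcal{G}$ has some $Q_i\in\mathcal{Q}_i$ with $Q_i\subseteq\mathcal{G}$. An execution with a guild is one in which a nonempty guild exists; the maximal guild $\mathcal{G}_{max}$ is the union of all guilds. Asymmetric reliable broadcast (arb-broadcast / arb-deliver) guarantees, in every execution with a guild: if a correct process arb-broadcasts $m$, every process of $\mathcal{G}_{max}$ eventually arb-delivers $m$; for each sender, all processes of $\mathcal{G}_{max}$ that arb-deliver from it deliver the same message; if some process of $\mathcal{G}_{max}$ arb-delivers a message from a sender, all processes of $\mathcal{G}_{max}$ eventually arb-deliver a message from that sender; a correct process arb-delivers at most one message per sender, and from a correct sender only a message it arb-broadcast. Algorithm $\mathsf{AG}$ (code of $p_i$; each correct process invokes ag-propose$(x_i)$ exactly once; each guarded ''upon there being ...'' action executes at most once, message handlers once per message). State: sets $S_i,T_i,U_i$ initially empty, boolean $sentT$ initially false. (1) Upon ag-propose$(x_i)$: arb-broadcast $(p_i,x_i)$. (2) Upon arb-delivering $(p_j,x_j)$ from $p_j$: $S_i\gets S_i\cup\{(p_j,x_j)\}$. (3) Upon there being $Q\in\mathcal{Q}_i$ such that for every $p_j\in Q$ some pair $(p_j,\cdot)\in S_i$: send $\langle\mathrm{DistributeS},p_i,S_i\rangle$ to all. (4) For a received $\langle\mathrm{DistributeS},p_j,S_j\rangle$: once $S_j\subseteq S_i$, provided $sentT$ is false at that moment,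 set $T_i\gets T_i\cup S_j$ and send $\langle\mathrm{Ack},p_i\rangle$ to $p_j$. (5) Upon Ack received from every member of some $Q\in\mathcal{Q}_i$: send Ready to all. (6) Upon Ready received from every member of some $Q\in\mathcal{Q}_i$: send Confirm to all. (7) Upon Confirm received from every member of some $K\in\mathcal{K}_i$: send Confirm to all. (8) Upon Confirm received from every member of some $Q\in\mathcal{Q}_i$: send $\langle\mathrm{DistributeT},p_i,T_i\rangle$ to all and set $sentT\gets$ true. (9) For a received $\langle\mathrm{DistributeT},p_j,T_j\rangle$ from $p_j$: once $T_j\subseteq S_i$, set $U_i\gets U_i\cup T_j$. (10) Upon DistributeT received from every member of some $Q\in\mathcal{Q}_i$: ag-deliver$(U_i)$. *)

From mathcomp Require Import all_boot.
Set Implicit Arguments.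
Unset Strict Implicit.
Unset Printing Implicit Defensive.

Section AG.

Variable P : finType.
Variable V : Type.

Definition in_star (A : {set {set P}}) (X : {set P}) : Prop :=
  exists2 Y, Y \in A & X \subset Y.

Definition is_abqs (FP Qs : P -> {set {set P}}) : Prop :=
  (forall i j (Qi Qj Fij : {set P}),
      Qi \in Qs i -> Qj \in Qs j -> in_star (FP i) Fij -> in_star (FP j) Fij ->
      ~~ (Qi :&: Qj \subset Fij))
  /\
  (forall i (Fi : {set P}), Fi \in FP i ->
      exists2 Qi, Qi \in Qs i & [disjoint Fi & Qi]).

Definition is_kernel (Qs : P -> {set {set P}}) (i : P) (K : {set P}) : Prop :=
  forall Q, Q \in Qs i -> K :&: Q != set0.

(* p_i is wise (F is the actual set of faulty processes) *)
Definition wise (FP : P -> {set {set P}}) (F : {set P}) (i : P) : Prop :=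
  i \notin F /\ in_star (FP i) F.

Definition is_guild (FP Qs : P -> {set {set P}}) (F : {set P}) (G : {set P}) : Prop :=
  forall i, i \in G -> wise FP F i /\ exists2 Q, Q \in Qs i & Q \subset G.

(* membership in the maximal guild (union of all guilds) *)
Definition in_Gmax (FP Qs : P -> {set {set P}}) (F : {set P}) (i : P) : Prop :=
  exists2 G, is_guild FP Qs F G & i \in G.

Definition exec_with_guild (FP Qs : P -> {set {set P}}) (F : {set P}) : Prop :=
  exists2 G, is_guild FP Qs F G & G != set0.

Definition pset := P * V -> Prop.
Definition psubset (A B : pset) : Prop := forall z, A z -> B z.

(* point-to-point messages (the sender is known from the authenticated link) *)
Inductive msg :=
| MDistS of pset
| MAck
| MReady
| MConfirm
| MDistT of pset.

Definition isAck (m : msg) : Prop := if m is MAck then True else False.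
Definition isReady (m : msg) : Prop := if m is MReady then True else False.
Definition isConfirm (m : msg) : Prop := if m is MConfirm then True else False.
Definition isDistT (m : msg) : Prop := if m is MDistT _ then True else False.

Record lstate := LState {
  proposed : Prop;
  Sset : pset;
  Tset : pset;
  Uset : pset;
  sentT : Prop;
  inbox : seq (P * msg);
  handled : nat -> Prop;       (* inbox entries whose handler (4)/(9) ran *)
  fired3 : Prop; fired5 : Prop; fired6 : Prop; fired7 : Prop;
  fired8 : Prop; fired10 : Prop;
  Ssent : option pset;
  agdelivered : option pset
}.

Definition init_state : lstate :=
  LState False (fun _ => False) (fun _ => False) (fun _ => False) False [::]
         (fun _ => False) False False False False False False None None.

Inductive event :=
| EPropose of V                  (* ag-propose(x); action (1): arb-broadcast *)
| EArbDel of P & V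
| ERecv of P & nat & nat & msg   (* receive m from p_j; for a correct p_j the
                                    two nats identify the message: the k-th
                                    message p_j sent at time s *)
| EA3
| EA4 of nat                     (* action (4) on inbox entry k, sentT false *)
| EA4skip of nat                 (* action (4) on inbox entry k, sentT true: no effect *)
| EA5 | EA6 | EA7 | EA8
| EA9 of nat
| EA10.

Definition entry (s : lstate) (k : nat) : option (P * msg) := onth (inbox s) k.

Definition received (s : lstate) (j : P) (kind : msg -> Prop) : Prop :=
  exists k m, entry s k = Some (j, m) /\ kind m.

Definition punion (A B : pset) : pset := fun z => A z \/ B z.

Definition mark (h : nat -> Prop) (k : nat) : nat -> Prop := fun k' => k' = k \/ h k'.

Definition step (s : lstate) (e : event) : lstate :=
  match e with
  | EPropose _ =>
      LState True (Sset s) (Tset s) (Uset s) (sentT s) (inbox s) (handled s)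
        (fired3 s) (fired5 s) (fired6 s) (fired7 s) (fired8 s) (fired10 s)
        (Ssent s) (agdelivered s)
  | EArbDel j x =>
      LState (proposed s) (punion (Sset s) (fun z => z = (j, x))) (Tset s) (Uset s)
        (sentT s) (inbox s) (handled s)
        (fired3 s) (fired5 s) (fired6 s) (fired7 s) (fired8 s) (fired10 s)
        (Ssent s) (agdelivered s)
  | ERecv j _ _ m =>
      LState (proposed s) (Sset s) (Tset s) (Uset s) (sentT s) (rcons (inbox s) (j, m))
        (handled s)
        (fired3 s) (fired5 s) (fired6 s) (fired7 s) (fired8 s) (fired10 s)
        (Ssent s) (agdelivered s)
  | EA3 =>
      LState (proposed s) (Sset s) (Tset s) (Uset s) (sentT s) (inbox s) (handled s)
        True (fired5 s) (fired6 s) (fired7 s) (fired8 s) (fired10 s)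
        (Some (Sset s)) (agdelivered s)
  | EA4 k =>
      let T' := if entry s k is Some (_, MDistS Sj) then punion (Tset s) Sj
                else Tset s in
      LState (proposed s) (Sset s) T' (Uset s) (sentT s) (inbox s) (mark (handled s) k)
        (fired3 s) (fired5 s) (fired6 s) (fired7 s) (fired8 s) (fired10 s)
        (Ssent s) (agdelivered s)
  | EA4skip k =>
      LState (proposed s) (Sset s) (Tset s) (Uset s) (sentT s) (inbox s)
        (mark (handled s) k)
        (fired3 s) (fired5 s) (fired6 s) (fired7 s) (fired8 s) (fired10 s)
        (Ssent s) (agdelivered s)
  | EA5 =>
      LState (proposed s) (Sset s) (Tset s) (Uset s) (sentT s) (inbox s) (handled s)
        (fired3 s) True (fired6 s) (fired7 s) (fired8 s) (fired10 s)
        (Ssent s) (agdelivered s)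
  | EA6 =>
      LState (proposed s) (Sset s) (Tset s) (Uset s) (sentT s) (inbox s) (handled s)
        (fired3 s) (fired5 s) True (fired7 s) (fired8 s) (fired10 s)
        (Ssent s) (agdelivered s)
  | EA7 =>
      LState (proposed s) (Sset s) (Tset s) (Uset s) (sentT s) (inbox s) (handled s)
        (fired3 s) (fired5 s) (fired6 s) True (fired8 s) (fired10 s)
        (Ssent s) (agdelivered s)
  | EA8 =>
      LState (proposed s) (Sset s) (Tset s) (Uset s) True (inbox s) (handled s)
        (fired3 s) (fired5 s) (fired6 s) (fired7 s) True (fired10 s)
        (Ssent s) (agdelivered s)
  | EA9 k =>
      let U' := if entry s k is Some (_, MDistT Tj) then punion (Uset s) Tj
                else Uset s in
      LState (proposed s) (Sset s) (Tset s) U' (sentT s) (inbox s) (mark (handled s) k)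
        (fired3 s) (fired5 s) (fired6 s) (fired7 s) (fired8 s) (fired10 s)
        (Ssent s) (agdelivered s)
  | EA10 =>
      LState (proposed s) (Sset s) (Tset s) (Uset s) (sentT s) (inbox s) (handled s)
        (fired3 s) (fired5 s) (fired6 s) (fired7 s) (fired8 s) True
        (Ssent s) (Some (Uset s))
  end.

Definition to_all (m : msg) : seq (P * msg) := [seq (q, m) | q <- enum P].

Definition sends (s : lstate) (e : event) : seq (P * msg) :=
  match e with
  | EA3 => to_all (MDistS (Sset s))
  | EA4 k => if entry s k is Some (j, _) then [:: (j, MAck)] else [::]
  | EA5 => to_all MReady
  | EA6 => to_all MConfirm
  | EA7 => to_all MConfirm
  | EA8 => to_all (MDistT (Tset s))
  | _ => [::]
  end.

Definition enabled (Qs : P -> {set {set P}}) (i : P) (s : lstate) (e : event) : Prop :=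
  match e with
  | EPropose _ => ~ proposed s
  | EArbDel _ _ => True          (* constrained by the arb properties *)
  | ERecv _ _ _ _ => True        (* constrained by the network properties *)
  | EA3 => ~ fired3 s /\
      exists2 Q, Q \in Qs i & forall j, j \in Q -> exists x, Sset s (j, x)
  | EA4 k => ~ handled s k /\
      (exists j Sj, entry s k = Some (j, MDistS Sj) /\ psubset Sj (Sset s)) /\ ~ sentT s
  | EA4skip k => ~ handled s k /\
      (exists j Sj, entry s k = Some (j, MDistS Sj) /\ psubset Sj (Sset s)) /\ sentT s
  | EA5 => ~ fired5 s /\
      exists2 Q, Q \in Qs i & forall j, j \in Q -> received s j isAck
  | EA6 => ~ fired6 s /\
      exists2 Q, Q \in Qs i & forall j, j \in Q -> received s j isReady
  | EA7 => ~ fired7 s /\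
      exists2 K, is_kernel Qs i K & forall j, j \in K -> received s j isConfirm
  | EA8 => ~ fired8 s /\
      exists2 Q, Q \in Qs i & forall j, j \in Q -> received s j isConfirm
  | EA9 k => ~ handled s k /\
      (exists j Tj, entry s k = Some (j, MDistT Tj) /\ psubset Tj (Sset s))
  | EA10 => ~ fired10 s /\
      exists2 Q, Q \in Qs i & forall j, j \in Q -> received s j isDistT
  end.

Definition local_action (e : event) : Prop :=
  match e with
  | EPropose _ | EArbDel _ _ | ERecv _ _ _ _ => False
  | _ => True
  end.

(* An execution is an infinite sequence of steps; at each step at most one
   process takes one event. *)
Definition trace := nat -> option (P * event).

(* local state of p_i before step t *)
Fixpoint st (ev : trace) (i : P) (t : nat) : lstate :=
  match t with
  | 0 => init_state
  | t'.+1 =>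
      match ev t' with
      | Some (q, e) => if q == i then step (st ev i t') e else st ev i t'
      | None => st ev i t'
      end
  end.

Definition sent_at (ev : trace) (j : P) (s : nat) : seq (P * msg) :=
  match ev s with
  | Some (q, e) => if q == j then sends (st ev j s) e else [::]
  | None => [::]
  end.

Definition arbdel (ev : trace) (t : nat) (i j : P) (x : V) : Prop :=
  ev t = Some (i, EArbDel j x).

Definition arbcast (ev : trace) (j : P) (x : V) : Prop :=
  exists t, ev t = Some (j, EPropose x).

(* ev is an execution of AG with faulty set F, in which arb-broadcast
   satisfies its specification (stated for executions with a guild). *)
Definition AG_execution (FP Qs : P -> {set {set P}}) (F : {set P}) (ev : trace) : Prop :=
  (forall t i e, ev t = Some (i, e) -> i \notin F -> enabled Qs i (st ev i t) e)
  /\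
  (* every correct process invokes ag-propose (exactly once, by the guard) *)
  (forall i, i \notin F -> exists x, arbcast ev i x)
  /\
  (* weak fairness of guarded actions of correct processes *)
  (forall i e t0, i \notin F -> local_action e ->
      (forall t, t0 <= t -> enabled Qs i (st ev i t) e) ->
      exists2 t, t0 <= t & ev t = Some (i, e))
  /\
  (* authenticated links: a message from a correct sender was sent to the
     receiver earlier and is received at most once *)
  (forall t i j s k m, i \notin F -> j \notin F -> ev t = Some (i, ERecv j s k m) ->
      s < t /\ onth (sent_at ev j s) k = Some (i, m) /\
      forall t' m', ev t' = Some (i, ERecv j s k m') -> t' = t)
  /\
  (* reliable links between correct processes *)
  (forall i j s k m, i \notin F -> j \notin F ->
      onth (sent_at ev j s) k = Some (i, m) ->
      exists t, ev t = Some (i, ERecv j s k m))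
  /\
  (* asymmetric reliable broadcast *)
  ((forall j x, j \notin F -> arbcast ev j x ->
       forall k, in_Gmax FP Qs F k -> exists t, arbdel ev t k j x)
   /\ (forall j k1 k2 t1 t2 x1 x2, in_Gmax FP Qs F k1 -> in_Gmax FP Qs F k2 ->
       arbdel ev t1 k1 j x1 -> arbdel ev t2 k2 j x2 -> x1 = x2)
   /\ (forall j k t x, in_Gmax FP Qs F k -> arbdel ev t k j x ->
       forall k', in_Gmax FP Qs F k' -> exists t' x', arbdel ev t' k' j x')
   /\ (forall i j t1 t2 x1 x2, i \notin F ->
       arbdel ev t1 i j x1 -> arbdel ev t2 i j x2 -> t1 = t2)
   /\ (forall i j t x, i \notin F -> j \notin F -> arbdel ev t i j x -> arbcast ev j x)).

End AG.

From mathcomp Require Import all_boot.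
From Stdlib Require Import Classical.
Set Implicit Arguments.
Unset Strict Implicit.
Unset Printing Implicit Defensive.

(* Some member of the maximal guild G performs action (8): otherwise no member
   of G ever sets sentT, so every member of G acknowledges the DistributeS of
   every other member, and quorum availability drives all of G through actions
   (5), (6) and (8).  Tracing the Confirm quorum of that member backwards, and
   using that every quorum and every kernel of a member of G meets G, gives a
   member p_h of G that performed (5).  One of the Acks it used comes from a
   member p_m of G that acknowledged S_h while sentT was still false, so S_h is
   contained in the set T_m that p_m later sends in DistributeT.  Once one member
   of G performs (8), the kernel rule (7) makes all of G perform (8), p_m
   included; and since T_m is contained in S_m, which by the reliable-broadcast
   properties eventually lies in every S_k with k in G, every member of G
   accepts that DistributeT and adds T_m to U_k. *)

#[local] Arguments EA3 {P V}.
#[local] Arguments EA4 {P V}.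
#[local] Arguments EA4skip {P V}.
#[local] Arguments EA5 {P V}.
#[local] Arguments EA6 {P V}.
#[local] Arguments EA7 {P V}.
#[local] Arguments EA8 {P V}.
#[local] Arguments EA9 {P V}.
#[local] Arguments MAck {P V}.
#[local] Arguments MReady {P V}.
#[local] Arguments MConfirm {P V}.
#[local] Arguments isAck {P V}.
#[local] Arguments isReady {P V}.
#[local] Arguments isConfirm {P V}.

Definition occurs (P : finType) V (ev : trace P V) (i : P) (e : event P V) : Prop :=
  exists t, ev t = Some (i, e).

Lemma eventually_forall (T : finType) (A : {set T}) (R : T -> nat -> Prop) :
  (forall p t t', t <= t' -> R p t -> R p t') ->
  (forall p, p \in A -> exists t, R p t) ->
  exists t0, forall p, p \in A -> forall t, t0 <= t -> R p t.
Proof.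
move=> R_mono R_ev.
suff [t0 Rt0] : exists t0, forall p, p \in enum A -> R p t0.
  by exists t0 => p pA t le; apply: R_mono le _; apply: Rt0; rewrite mem_enum.
have : forall p, p \in enum A -> exists t, R p t by move=> p; rewrite mem_enum; apply: R_ev.
elim: (enum A) => [|a s IH] R_s; first by exists 0.
have [ta Rta] := R_s a (mem_head _ _).
have [ts Rts] : exists t0, forall p, p \in s -> R p t0.
  by apply: IH => p ps; apply: R_s; rewrite inE ps orbT.
exists (maxn ta ts) => p; rewrite inE => /predU1P [->|ps].
  exact: R_mono (leq_maxl _ _) Rta.
exact: R_mono (leq_maxr _ _) (Rts p ps).
Qed.

Section Guild.

Variables (P : finType) (FP Qs : P -> {set {set P}}) (F : {set P}).
Local Notation gmax := (in_Gmax FP Qs F).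

Lemma gmax_correct i : gmax i -> i \notin F.
Proof. by case=> G hG iG; case: (hG i iG) => [[]]. Qed.

Lemma gmax_wise i : gmax i -> in_star (FP i) F.
Proof. by case=> G hG iG; case: (hG i iG) => [[]]. Qed.

Lemma gmax_quorum i : gmax i -> exists2 Q, Q \in Qs i & forall j, j \in Q -> gmax j.
Proof.
case=> G hG iG; case: (hG i iG) => _ [Q QiQ QG]; exists Q => // j jQ.
by exists G => //; apply: (subsetP QG).
Qed.

Lemma gmax_kernel_meets_gmax i K :
  gmax i -> is_kernel Qs i K -> exists2 x, x \in K & gmax x.
Proof.
move=> gi Ki; have [Q QiQ Qg] := gmax_quorum gi.
by have /set0Pn [x] := Ki _ QiQ; rewrite inE => /andP [xK /Qg]; exists x.
Qed.

Hypothesis abqs : is_abqs FP Qs.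

Lemma gmax_quorums_meet_correct i j Qi Qj :
  gmax i -> gmax j -> Qi \in Qs i -> Qj \in Qs j -> exists2 x, x \in Qi :&: Qj & x \notin F.
Proof.
case: abqs => consistent _ gi gj QiQ QjQ.
have := consistent i j Qi Qj F QiQ QjQ (gmax_wise gi) (gmax_wise gj).
by case/subsetPn => x; exists x.
Qed.

Lemma gmax_quorum_meets_gmax i Q : gmax i -> Q \in Qs i -> exists2 x, x \in Q & gmax x.
Proof.
move=> gi QiQ; have [Q' Q'iQ Q'g] := gmax_quorum gi.
have [x] := gmax_quorums_meet_correct gi gi QiQ Q'iQ.
by rewrite inE => /andP [xQ /Q'g]; exists x.
Qed.

Lemma correct_quorum_kernel j k Q :
  gmax j -> gmax k -> Q \in Qs j -> is_kernel Qs k (Q :\: F).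
Proof.
move=> gj gk QjQ Q' Q'kQ; have [x] := gmax_quorums_meet_correct gj gk QjQ Q'kQ.
by rewrite !inE => /andP [xQ xQ'] xF; apply/set0Pn; exists x; rewrite !inE xF xQ xQ'.
Qed.

End Guild.

Section LocalStates.

Variables (P : finType) (V : Type) (ev : trace P V) (i : P).
Local Notation st := (st ev i).

Lemma st_step t e : ev t = Some (i, e) -> st t.+1 = step (st t) e.
Proof. by move=> /= ->; rewrite eqxx. Qed.

Lemma st_succ t : st t.+1 = st t \/ exists2 e, ev t = Some (i, e) & st t.+1 = step (st t) e.
Proof.
rewrite /=; case: (ev t) => [[q e]|]; last by left.
by case: eqP => [->|]; [right; exists e | left].
Qed.

Lemma st_stable (f : lstate P V -> Prop) t t' :
  t <= t' -> (forall s e, f s -> f (step s e)) -> f (st t) -> f (st t').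
Proof.
move=> /subnKC <- f_step; elim: (t' - t) => [|n IH]; first by rewrite addn0.
by rewrite addnS => /IH; case: (st_succ (t + n)) => [->|[e _ ->]] //; apply: f_step.
Qed.

Lemma st_origin (f : lstate P V -> Prop) (E : event P V -> Prop) t :
  (forall s e, f (step s e) -> f s \/ E e) -> ~ f (init_state P V) ->
  f (st t) -> exists t' e, [/\ t' < t, E e & ev t' = Some (i, e)].
Proof.
move=> f_step f0; elim: t => [//|t IH].
have weaken t' e : t' < t -> ev t' = Some (i, e) -> E e ->
    exists t' e, [/\ t' < t.+1, E e & ev t' = Some (i, e)].
  by move=> lt evt' Ee; exists t', e; split => //; apply: ltnW.
case: (st_succ t) => [->|[e evt ->]].
  by case/IH => t' [e [lt Ee evt']]; apply: weaken lt evt' Ee.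
by case/f_step => [/IH [t' [e' [lt Ee evt']]]|Ee]; [apply: weaken lt evt' Ee | exists t, e].
Qed.

Lemma Sset_mono t t' : t <= t' -> psubset (Sset (st t)) (Sset (st t')).
Proof.
by move=> le z; apply: (st_stable (f := fun s => Sset s z) le _) => s [] /=; do ?left.
Qed.

Lemma Tset_mono t t' : t <= t' -> psubset (Tset (st t)) (Tset (st t')).
Proof.
move=> le z; apply: (st_stable (f := fun s => Tset s z) le _) => s [] //= k.
by case: (entry s k) => [[_ []]|] //; left.
Qed.

Lemma sentT_mono t t' : t <= t' -> sentT (st t) -> sentT (st t').
Proof. by move=> le; apply: (st_stable (f := fun s => sentT s) le _) => s []. Qed.

Lemma entry_mono t t' k x : t <= t' -> entry (st t) k = Some x -> entry (st t') k = Some x.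
Proof.
move=> le; apply: (st_stable (f := fun s => entry s k = Some x) le _) => s [] //= j _ _ m.
rewrite /entry /= -cats1 onth_cat.
by move=> ekx; have := onthTE (inbox s) k; rewrite ekx => <-.
Qed.

Lemma entry_uniq t t' k x y : entry (st t) k = Some x -> entry (st t') k = Some y -> x = y.
Proof.
wlog le : t t' x y / t <= t' => [wlog_le|ekx eky].
  by case: (leqP t t') => [|/ltnW] le ekx eky; [|symmetry]; apply: wlog_le le _ _.
by move: (entry_mono le ekx); rewrite eky => -[].
Qed.

Lemma received_mono t t' j kind : t <= t' -> received (st t) j kind -> received (st t') j kind.
Proof. by move=> le [k [m [ekm km]]]; exists k, m; split; first exact: entry_mono le ekm. Qed.

Lemma sentT_origin t : sentT (st t) -> exists2 t', t' < t & ev t' = Some (i, EA8).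
Proof.
move=> sentt; have [|//|t' [_ [lt <- evt']]] := st_origin (E := eq EA8) _ _ sentt.
  by move=> s [] /=; auto.
by exists t'.
Qed.

Lemma handled_origin t k : handled (st t) k ->
  exists2 t', t' < t & [\/ ev t' = Some (i, EA4 k), ev t' = Some (i, EA4skip k)
                        | ev t' = Some (i, EA9 k)].
Proof.
move=> hk; have [|//|t' [e [lt Ee evt']]] :=
  st_origin (f := fun s => handled s k)
    (E := fun e => [\/ e = EA4 k, e = EA4skip k | e = EA9 k]) _ _ hk.
  by move=> s [] //=; try (by left); move=> n [->|]; auto using Or31, Or32, Or33.
by exists t'; case: Ee evt' => -> ; auto using Or31, Or32, Or33.
Qed.

Lemma Sset_origin t j x : Sset (st t) (j, x) -> occurs ev i (EArbDel j x).
Proof.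
move=> Sjx; have [|//|t' [_ [_ <- evt']]] :=
  st_origin (f := fun s => Sset s (j, x)) (E := eq (EArbDel j x)) _ _ Sjx.
  by move=> s [] //=; try (by left); move=> j' x' [|[-> ->]]; auto.
by exists t'.
Qed.

Lemma entry_origin t k j m : entry (st t) k = Some (j, m) ->
  exists t' a b, t' < t /\ ev t' = Some (i, ERecv j a b m).
Proof.
move=> ekm; have [||t' [_ [lt [a [b ->]] evt']]] :=
  st_origin (f := fun s => entry s k = Some (j, m))
    (E := fun e => exists a b, e = ERecv j a b m) _ _ ekm.
- move=> s [] //=; try (by left); move=> j' a b m'.
  rewrite /entry /= -cats1 onth_cat; case: ltnP => _ ; first by left.
  by case/onth1P => _ [-> ->]; right; exists a, b.
- by rewrite /entry /= onth0n.
- by exists t', a, b.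
Qed.

Lemma fired_origin (f : lstate P V -> Prop) e0 t :
  (forall s e, f (step s e) -> f s \/ e = e0) -> ~ f (init_state P V) ->
  f (st t) -> occurs ev i e0.
Proof. by move=> f_step f0 /(st_origin f_step f0) [t' [_ [_ -> evt']]]; exists t'. Qed.

Lemma EA3_effect t : ev t = Some (i, EA3) -> Ssent (st t.+1) = Some (Sset (st t)).
Proof. by move/st_step ->. Qed.

Lemma EA4_effect t k j Sj : ev t = Some (i, EA4 k) ->
  entry (st t) k = Some (j, MDistS Sj) -> psubset Sj (Tset (st t.+1)).
Proof. by move/st_step -> => /= -> z; right. Qed.

Lemma EA9_effect t k j Tj : ev t = Some (i, EA9 k) ->
  entry (st t) k = Some (j, MDistT Tj) -> psubset Tj (Uset (st t.+1)).
Proof. by move/st_step -> => /= -> z; right. Qed.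

Lemma Tset_before_EA8 s t : ev t = Some (i, EA8) -> ~ sentT (st s) ->
  psubset (Tset (st s)) (Tset (st t)).
Proof.
move=> evt unsent; apply: Tset_mono; rewrite leqNgt; apply/negP => lt.
by apply: unsent; apply: sentT_mono lt _; rewrite (st_step evt).
Qed.

End LocalStates.

Definition emits (P : finType) V (s : lstate P V) (e : event P V) (i : P) (m : msg P V) :=
  match m with
  | MDistS S0 => e = EA3 /\ S0 = Sset s
  | MAck => exists k m0, e = EA4 k /\ entry s k = Some (i, m0)
  | MReady => e = EA5
  | MConfirm => e = EA6 \/ e = EA7
  | MDistT T0 => e = EA8 /\ T0 = Tset s
  end.

Definition broadcasts (P : finType) V (ev : trace P V) (i : P) (m : msg P V) : Prop :=
  exists s e, ev s = Some (i, e) /\ sends (st ev i s) e = to_all m.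

Lemma sends_emits (P : finType) V (s : lstate P V) e k i m :
  onth (sends s e) k = Some (i, m) -> emits s e i m.
Proof.
case: e => [||||n|||||||] /=; rewrite ?onth0n //;
  try by rewrite /to_all onth_map; case: onth => //= q [_ <-] /=; auto.
case ekn: (entry s n) => [[j m0]|]; last by rewrite onth0n.
by case/onth1P => _ [<- <-]; exists n, m0.
Qed.

Lemma to_all_reaches (P : finType) V (m : msg P V) i :
  exists k, onth (to_all m) k = Some (i, m).
Proof.
have /onthP [k ki] : i \in enum P by rewrite mem_enum.
by exists k; rewrite /to_all onth_map ki.
Qed.

Section Execution.

Variables (P : finType) (V : Type) (FP Qs : P -> {set {set P}}) (F : {set P}).
Variable ev : trace P V.
Hypothesis exec : AG_execution FP Qs F ev.
Local Notation gmax := (in_Gmax FP Qs F).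

Lemma correct_step_enabled t i e :
  ev t = Some (i, e) -> i \notin F -> enabled Qs i (st ev i t) e.
Proof. by case: exec => enabled_steps _; apply: enabled_steps. Qed.

Lemma correct_proposes i : i \notin F -> exists x, arbcast ev i x.
Proof. by case: exec => _ [proposes _]; apply: proposes. Qed.

Lemma link_authenticity t i j s k m : i \notin F -> j \notin F ->
  ev t = Some (i, ERecv j s k m) -> s < t /\ onth (sent_at ev j s) k = Some (i, m).
Proof. by case: exec => _ [_ [_ [auth _]]] iF jF /(auth _ _ _ _ _ _ iF jF) [lt [sent _]]. Qed.

Lemma link_reliability i j s k m : i \notin F -> j \notin F ->
  onth (sent_at ev j s) k = Some (i, m) -> exists t, ev t = Some (i, ERecv j s k m).
Proof. by case: exec => _ [_ [_ [_ [reliable _]]]]; apply: reliable. Qed.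

Lemma arb_validity j x k : j \notin F -> arbcast ev j x -> gmax k -> exists t, arbdel ev t k j x.
Proof. by case: exec => _ [_ [_ [_ [_ [validity _]]]]] jF /validity; apply. Qed.

Lemma arb_agreement j k1 k2 t1 t2 x1 x2 : gmax k1 -> gmax k2 ->
  arbdel ev t1 k1 j x1 -> arbdel ev t2 k2 j x2 -> x1 = x2.
Proof. by case: exec => _ [_ [_ [_ [_ [_ [agreement _]]]]]]; apply: agreement. Qed.

Lemma arb_totality j k t x k' : gmax k -> arbdel ev t k j x -> gmax k' ->
  exists t' x', arbdel ev t' k' j x'.
Proof.
by case: exec => _ [_ [_ [_ [_ [_ [_ [totality _]]]]]]] gk /(totality _ _ _ _ gk); apply.
Qed.

Lemma occurs_of_eventually_enabled i e t0 : i \notin F -> local_action e ->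
  (forall t, t0 <= t -> enabled Qs i (st ev i t) e \/ occurs ev i e) -> occurs ev i e.
Proof.
case: exec => _ [_ [fair _]] iF local ena; apply: NNPP => never.
have [t _ evt] : exists2 t, t0 <= t & ev t = Some (i, e).
  by apply: fair iF local _ => t le; case: (ena t le) => // /never.
by apply: never; exists t.
Qed.

Lemma occurs_of_guard i e (fired : lstate P V -> Prop) (A : {set P})
    (R : lstate P V -> P -> Prop) :
  i \notin F -> local_action e ->
  (forall s e', fired (step s e') -> fired s \/ e' = e) -> ~ fired (init_state P V) ->
  (forall s, ~ fired s -> (forall j, j \in A -> R s j) -> enabled Qs i s e) ->
  (forall j t t', t <= t' -> R (st ev i t) j -> R (st ev i t') j) ->
  (forall j, j \in A -> exists t, R (st ev i t) j) -> occurs ev i e.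
Proof.
move=> iF local fired_step fired0 ena R_mono R_ev.
have [t0 Rt0] := eventually_forall R_mono R_ev.
apply: (occurs_of_eventually_enabled (t0 := t0)) => // t le.
have [fired_t|unfired] := classic (fired (st ev i t)); first by right; apply: fired_origin fired_t.
by left; apply: ena unfired _ => j jA; apply: Rt0.
Qed.

Lemma received_origin t i j k m : i \notin F -> j \notin F ->
  entry (st ev i t) k = Some (j, m) ->
  exists s e, [/\ s < t, ev s = Some (j, e) & emits (st ev j s) e i m].
Proof.
move=> iF jF /entry_origin [t' [a [b [lt evt']]]].
have [la] := link_authenticity iF jF evt'; rewrite /sent_at.
case eva: (ev a) => [[q e]|]; last by rewrite onth0n.
case: eqP => [<- /sends_emits|_]; last by rewrite onth0n.
by exists a, e; split => //; apply: ltn_trans lt.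
Qed.

Lemma sent_received j i s e m : j \notin F -> i \notin F -> ev s = Some (j, e) ->
  (exists k, onth (sends (st ev j s) e) k = Some (i, m)) ->
  exists t k, entry (st ev i t) k = Some (j, m).
Proof.
move=> jF iF evs [k sent].
have [t evt] : exists t, ev t = Some (i, ERecv j s k m).
  by apply: link_reliability iF jF _; rewrite /sent_at evs eqxx.
exists t.+1, (size (inbox (st ev i t))).
by rewrite /entry (st_step evt) /= -cats1 onth_cat ltnn subnn.
Qed.

Lemma broadcast_received j i s e m : j \notin F -> i \notin F -> ev s = Some (j, e) ->
  sends (st ev j s) e = to_all m -> exists t k, entry (st ev i t) k = Some (j, m).
Proof.
by move=> jF iF evs to_i; apply: sent_received jF iF evs _; rewrite to_i; apply: to_all_reaches.
Qed.

Lemma Tset_sub_Sset i t : i \notin F -> psubset (Tset (st ev i t)) (Sset (st ev i t)).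
Proof.
move=> iF; elim: t => [//|t IH].
case: (st_succ ev i t) => [->//|[e evt ->]].
move: (correct_step_enabled evt iF); case: e {evt} => //= [j x|k] ena z.
  by move/IH; left.
by case: ena => _ [[j [Sj [-> Sj_sub]]] _] [/IH|/Sj_sub].
Qed.

Lemma Sset_propagates m k t : gmax m -> gmax k ->
  exists t', psubset (Sset (st ev m t)) (Sset (st ev k t')).
Proof.
move=> gm gk.
have [t0 Sk] : exists t0, forall p, p \in [set: P] -> forall t', t0 <= t' ->
    forall x, Sset (st ev m t) (p, x) -> Sset (st ev k t') (p, x).
  apply: eventually_forall => [p t1 t2 le Sk1 x /Sk1|p _]; first exact: Sset_mono.
  have [[x Smx]|none] := classic (exists x, Sset (st ev m t) (p, x)); last first.
    by exists 0 => x Smx; case: none; exists x.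
  have [t1 evt1] := Sset_origin Smx.
  have [t2 [x' evt2]] := arb_totality gm evt1 gk.
  exists t2.+1 => x'' Smx''; have [t1'' evt1''] := Sset_origin Smx''.
  by rewrite (st_step evt2) /= (arb_agreement gm gk evt1'' evt2); right.
by exists t0 => -[p x]; apply: Sk (in_setT p) t0 (leqnn _) x.
Qed.

Lemma EA4_occurs i t k j Sj : i \notin F -> entry (st ev i t) k = Some (j, MDistS Sj) ->
  (exists t, psubset Sj (Sset (st ev i t))) -> (forall t, ~ sentT (st ev i t)) ->
  occurs ev i (EA4 k).
Proof.
move=> iF ek [tS Sj_sub] unsent.
apply: (occurs_of_eventually_enabled (t0 := maxn t tS)) => // t' le.
have [hk|unhandled] := classic (handled (st ev i t') k); [right | left].
  have [t'' _ [evt''|evt''|evt'']] := handled_origin hk; first by exists t''.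
    by case: (correct_step_enabled evt'' iF) => _ [_ /unsent].
  by case: (correct_step_enabled evt'' iF) => _ [j' [Tj [/(entry_uniq ek)]]].
split=> //; split; last exact: unsent.
exists j, Sj; split; first exact: entry_mono (leq_trans (leq_maxl _ _) le) ek.
by move=> z /Sj_sub /(Sset_mono (leq_trans (leq_maxr _ _) le)).
Qed.

Lemma EA9_occurs i t k j Tj : i \notin F -> entry (st ev i t) k = Some (j, MDistT Tj) ->
  (exists t, psubset Tj (Sset (st ev i t))) -> occurs ev i (EA9 k).
Proof.
move=> iF ek [tS Tj_sub].
apply: (occurs_of_eventually_enabled (t0 := maxn t tS)) => // t' le.
have [hk|unhandled] := classic (handled (st ev i t') k); [right | left].
  have [t'' _ [evt''|evt''|evt'']] := handled_origin hk; last by exists t''.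
    by case: (correct_step_enabled evt'' iF) => _ [[j' [Sj [/(entry_uniq ek)]]]].
  by case: (correct_step_enabled evt'' iF) => _ [[j' [Sj [/(entry_uniq ek)]]]].
split=> //; exists j, Tj; split; first exact: entry_mono (leq_trans (leq_maxl _ _) le) ek.
by move=> z /Tj_sub /(Sset_mono (leq_trans (leq_maxr _ _) le)).
Qed.

Lemma gmax_EA3 h : gmax h -> occurs ev h EA3.
Proof.
move=> gh; have [Q QhQ Qg] := gmax_quorum gh.
apply: (occurs_of_guard (fired := fun s => fired3 s) (A := Q)
          (R := fun s j => exists x, Sset s (j, x))) => //.
- exact: gmax_correct gh.
- by move=> s [] /=; auto.
- by move=> s unfired Rs; split=> //; exists Q.
- by move=> j t t' le [x /(Sset_mono le)]; exists x.
move=> j /Qg gj; have [x cast] := correct_proposes (gmax_correct gj).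
have [t evt] := arb_validity (gmax_correct gj) cast gh.
by exists t.+1, x; rewrite (st_step evt) /=; right.
Qed.

Lemma EA5_occurs i Q : i \notin F -> Q \in Qs i ->
  (forall j, j \in Q -> exists t, received (st ev i t) j isAck) -> occurs ev i EA5.
Proof.
move=> iF QiQ; apply: (occurs_of_guard (fired := fun s => fired5 s)
                         (R := fun s j => received s j isAck)) => //.
- by move=> s [] /=; auto.
- by move=> s unfired Rs; split=> //; exists Q.
- by move=> j t t'; apply: received_mono.
Qed.

Lemma EA6_occurs i Q : i \notin F -> Q \in Qs i ->
  (forall j, j \in Q -> exists t, received (st ev i t) j isReady) -> occurs ev i EA6.
Proof.
move=> iF QiQ; apply: (occurs_of_guard (fired := fun s => fired6 s)
                         (R := fun s j => received s j isReady)) => //.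
- by move=> s [] /=; auto.
- by move=> s unfired Rs; split=> //; exists Q.
- by move=> j t t'; apply: received_mono.
Qed.

Lemma EA7_occurs i K : i \notin F -> is_kernel Qs i K ->
  (forall j, j \in K -> exists t, received (st ev i t) j isConfirm) -> occurs ev i EA7.
Proof.
move=> iF Ki; apply: (occurs_of_guard (fired := fun s => fired7 s)
                        (R := fun s j => received s j isConfirm)) => //.
- by move=> s [] /=; auto.
- by move=> s unfired Rs; split=> //; exists K.
- by move=> j t t'; apply: received_mono.
Qed.

Lemma EA8_occurs i Q : i \notin F -> Q \in Qs i ->
  (forall j, j \in Q -> exists t, received (st ev i t) j isConfirm) -> occurs ev i EA8.
Proof.
move=> iF QiQ; apply: (occurs_of_guard (fired := fun s => fired8 s)
                         (R := fun s j => received s j isConfirm)) => //.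
- by move=> s [] /=; auto.
- by move=> s unfired Rs; split=> //; exists Q.
- by move=> j t t'; apply: received_mono.
Qed.

Lemma gmax_quorum_receives m kind k : kind m -> gmax k ->
  (forall x, gmax x -> broadcasts ev x m) ->
  exists2 Q, Q \in Qs k & forall x, x \in Q -> exists t, received (st ev k t) x kind.
Proof.
move=> km gk bcast; have [Q QkQ Qg] := gmax_quorum gk; exists Q => // x /Qg gx.
have [s [e [evs to_all_m]]] := bcast x gx.
have [t [i ei]] := broadcast_received (gmax_correct gx) (gmax_correct gk) evs to_all_m.
by exists t, i, m.
Qed.

Lemma gmax_EA6_of_EA5 :
  (forall x, gmax x -> occurs ev x EA5) -> forall k, gmax k -> occurs ev k EA6.
Proof.
move=> EA5_gmax k gk.
have [|Q QkQ recv] := gmax_quorum_receives (m := MReady) (kind := isReady) I gk.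
  by move=> x /EA5_gmax [s evs]; exists s, EA5.
exact: EA6_occurs (gmax_correct gk) QkQ recv.
Qed.

Lemma gmax_EA8_of_confirms :
  (forall x, gmax x -> broadcasts ev x MConfirm) -> forall k, gmax k -> occurs ev k EA8.
Proof.
move=> confirms k gk.
have [Q QkQ recv] := gmax_quorum_receives (m := MConfirm) (kind := isConfirm) I gk confirms.
exact: EA8_occurs (gmax_correct gk) QkQ recv.
Qed.

Lemma confirm_sender t j x i : j \notin F -> x \notin F ->
  entry (st ev j t) i = Some (x, MConfirm) ->
  exists2 s, s < t & ev s = Some (x, EA6) \/ ev s = Some (x, EA7).
Proof.
move=> jF xF /(received_origin jF xF) [s [e [lt evs emit]]].
by exists s => //; case: emit evs => -> ; [left | right].
Qed.

Section NeverSentT.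

Hypothesis unsent : forall k, gmax k -> forall t, ~ sentT (st ev k t).

Lemma gmax_acks h k : gmax h -> gmax k -> exists t, received (st ev h t) k isAck.
Proof.
move=> gh gk; have [s3 evs3] := gmax_EA3 gh.
have [t [i ei]] := broadcast_received (gmax_correct gh) (gmax_correct gk) evs3 (erefl _).
have [t4 evt4] :=
  EA4_occurs (gmax_correct gk) ei (Sset_propagates s3 gh gk) (unsent gk).
have [_ [[j [Sj [ei4 _]]] _]] := correct_step_enabled evt4 (gmax_correct gk).
have [ejh _] := entry_uniq ei ei4; subst j.
have ack : exists n, onth (sends (st ev k t4) (EA4 i)) n = Some (h, MAck).
  by exists 0; rewrite /= ei4.
have [t' [i' ei']] := sent_received (gmax_correct gk) (gmax_correct gh) evt4 ack.
by exists t', i', MAck.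
Qed.

Lemma gmax_EA5_of_unsent h : gmax h -> occurs ev h EA5.
Proof.
move=> gh; have [Q QhQ Qg] := gmax_quorum gh.
by apply: EA5_occurs (gmax_correct gh) QhQ _ => j /Qg /(gmax_acks gh).
Qed.

End NeverSentT.

Lemma gmax_EA8_exists : exec_with_guild FP Qs F -> exists2 j, gmax j & occurs ev j EA8.
Proof.
case=> G G_guild /set0Pn [k kG]; have gk : gmax k by exists G.
apply: NNPP => none.
have unsent j : gmax j -> forall t, ~ sentT (st ev j t).
  by move=> gj t /sentT_origin [t' _ evt']; apply: none; exists j => //; exists t'.
apply: none; exists k => //; apply: gmax_EA8_of_confirms gk => x gx.
by have [s evs] := gmax_EA6_of_EA5 (gmax_EA5_of_unsent unsent) gx; exists s, EA6.
Qed.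

Lemma DistT_absorbed m t8 k : gmax m -> ev t8 = Some (m, EA8) -> gmax k ->
  exists t, psubset (Tset (st ev m t8)) (Uset (st ev k t)).
Proof.
move=> gm evt8 gk.
have [t [i ei]] := broadcast_received (gmax_correct gm) (gmax_correct gk) evt8 (erefl _).
have [tS Sk] := Sset_propagates t8 gm gk.
have [|t9 evt9] := EA9_occurs (gmax_correct gk) ei.
  by exists tS => z /(Tset_sub_Sset (gmax_correct gm)) /Sk.
have [_ [j [Tj [ei9 _]]]] := correct_step_enabled evt9 (gmax_correct gk).
have [ejm eTj] := entry_uniq ei ei9; subst j Tj.
by exists t9.+1; apply: EA9_effect evt9 ei9.
Qed.

Hypothesis abqs : is_abqs FP Qs.

Lemma gmax_EA8_spreads :
  (exists2 j, gmax j & occurs ev j EA8) -> forall k, gmax k -> occurs ev k EA8.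
Proof.
move=> [j gj [t8 evt8]]; apply: gmax_EA8_of_confirms => k gk.
suff [t7 evt7] : occurs ev k EA7 by exists t7, EA7.
have [_ [Q QjQ recv]] := correct_step_enabled evt8 (gmax_correct gj).
apply: (EA7_occurs (gmax_correct gk) (correct_quorum_kernel abqs gj gk QjQ)) => x.
rewrite inE => /andP [xF /recv [i [m [ei mC]]]]; case: m ei mC => // ei _.
have [s _ evs] := confirm_sender (gmax_correct gj) xF ei.
have [t [i' ei']] : exists t i', entry (st ev k t) i' = Some (x, MConfirm).
  by case: evs => evs;
    exact: (broadcast_received (m := MConfirm) xF (gmax_correct gk) evs (erefl _)).
by exists t, i', MConfirm.
Qed.

Lemma gmax_confirm_origin t j : gmax j ->
  ev t = Some (j, EA6) \/ ev t = Some (j, EA7) -> exists2 h, gmax h & occurs ev h EA5.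
Proof.
elim/ltn_ind: t j => t IH j gj [evt|evt].
  have [_ [Q QjQ recv]] := correct_step_enabled evt (gmax_correct gj).
  have [x xQ gx] := gmax_quorum_meets_gmax abqs gj QjQ.
  have [i [m [ei mR]]] := recv x xQ; case: m ei mR => // ei _.
  have [s [e [_ evs emit]]] := received_origin (gmax_correct gj) (gmax_correct gx) ei.
  by exists x => //; exists s; rewrite evs emit.
have [_ [K Kj recv]] := correct_step_enabled evt (gmax_correct gj).
have [x xK gx] := gmax_kernel_meets_gmax gj Kj.
have [i [m [ei mC]]] := recv x xK; case: m ei mC => // ei _.
have [s lt evs] := confirm_sender (gmax_correct gj) (gmax_correct gx) ei.
exact: IH lt x gx evs.
Qed.

Lemma gmax_EA8_origin j : gmax j -> occurs ev j EA8 -> exists2 h, gmax h & occurs ev h EA5.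
Proof.
move=> gj [t evt]; have [_ [Q QjQ recv]] := correct_step_enabled evt (gmax_correct gj).
have [x xQ gx] := gmax_quorum_meets_gmax abqs gj QjQ.
have [i [m [ei mC]]] := recv x xQ; case: m ei mC => // ei _.
have [s _ evs] := confirm_sender (gmax_correct gj) (gmax_correct gx) ei.
exact: gmax_confirm_origin gx evs.
Qed.

Lemma Ssent_acked_before_sentT h : gmax h -> occurs ev h EA5 ->
  exists t Si, Ssent (st ev h t) = Some Si /\
    exists2 m, gmax m & exists s, psubset Si (Tset (st ev m s)) /\ ~ sentT (st ev m s).
Proof.
move=> gh [t5 evt5]; have [_ [Q QhQ recv]] := correct_step_enabled evt5 (gmax_correct gh).
have [m mQ gm] := gmax_quorum_meets_gmax abqs gh QhQ.
have [i [a [ei aA]]] := recv m mQ; case: a ei aA => // ei _.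
have [s [e [_ evs [k [a [Ek ek]]]]]] :=
  received_origin (gmax_correct gh) (gmax_correct gm) ei; subst e.
have [_ [[j [Sj [ek' _]]] unsent]] := correct_step_enabled evs (gmax_correct gm).
have [ejh ea] := entry_uniq ek ek'; subst j a.
have [s' [e [_ evs' [Ee eSj]]]] :=
  received_origin (gmax_correct gm) (gmax_correct gh) ek'; subst e.
exists s'.+1, Sj; split; first by rewrite (EA3_effect evs') eSj.
exists m => //; exists s.+1; split; first exact: EA4_effect evs ek'.
by rewrite (st_step evs).
Qed.

End Execution.

Theorem lemma3p7 (P : finType) (V : Type) (FP Qs : P -> {set {set P}})
  (F : {set P}) (ev : trace P V) :
  is_abqs FP Qs ->
  exec_with_guild FP Qs F ->
  AG_execution FP Qs F ev ->
  exists2 i, in_Gmax FP Qs F i &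
    exists t (Si : pset P V), Ssent (st ev i t) = Some Si /\
      forall k, in_Gmax FP Qs F k ->
        exists t', psubset Si (Uset (st ev k t')).
Proof.
move=> abqs guild exec.
have EA8_somewhere := gmax_EA8_exists exec guild.
have [j gj /(gmax_EA8_origin exec abqs gj) [h gh EA5h]] := EA8_somewhere.
have [t [Si [sent [m gm [s [Si_sub unsent]]]]]] := Ssent_acked_before_sentT exec abqs gh EA5h.
exists h => //; exists t, Si; split=> // k gk.
have [t8 evt8] := gmax_EA8_spreads exec abqs EA8_somewhere gm.
have [t' absorbed] := DistT_absorbed exec gm evt8 gk.
by exists t' => z /Si_sub /(Tset_before_EA8 evt8 unsent) /absorbed.
Qed.
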